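(* Let $G=\mathbb{R}\ltimes\mathbb{R}^2$, where $t\in\mathbb{R}$ acts on $\mathbb{R}^2$ by rotation through angle $2\pi t$. Let $\varrho=\begin{bmatrix}1&0\\0&-1\end{bmatrix}$ and define $\varphi(t,x)=(-t,2\varrho x)$ for $t\in\mathbb{R}$, $x\in\mathbb{R}^2$. Then $\varphi$ is a continuous automorphism of $G$ with $R(\varphi)=1$, and the automorphism $\varphi_1$ it induces on $G/Z(G)\cong \mathrm{SO}(2,\mathbb{R})\ltimes\mathbb{R}^2$ (standard action) also satisfies $R(\varphi_1)=1$. Consequently neither $\mathbb{R}\ltimes\mathbb{R}^2$ nor $\mathrm{SO}(2,\mathbb{R})\ltimes\mathbb{R}^2$ (with these actions) has the topological $R_\infty$-property.
   Context: For an automorphism $\varphi$ of a group $G$, the $\varphi$-twisted conjugacy classes are the equivalence classes of the relation $x\sim_\varphi y$ iff $y=gx\varphi(g)^{-1}$ for some $g\in G$; $R(\varphi)\in\mathbb{N}\cup\{\infty\}$ is their number. $Z(G)$ is the center of $G$ (here the subgroup $\{(k,0):k\in\mathbb{Z}\}$). A topological group $G$ has the topological $R_\infty$-property if $R(\varphi)=\infty$ for every automorphism $\varphi$ of $G$ that is a homeomorphism. *)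

From HB Require Import structures.
From mathcomp Require Import all_boot all_order all_algebra.
From mathcomp Require Import all_classical all_reals all_analysis.
Set Implicit Arguments. Unset Strict Implicit. Unset Printing Implicit Defensive.
Import Order.TTheory GRing.Theory Num.Theory.
Import numFieldNormedType.Exports.
Local Open Scope classical_set_scope.
Local Open Scope ring_scope.

Section Generic.
Context {T : topologicalType}.

Definition twisted_rel (S : set T) (mul : T -> T -> T) (inv : T -> T)
  (f : T -> T) (x y : T) : Prop :=
  exists g, S g /\ y = mul (mul g x) (inv (f g)).

Definition twisted_class (S : set T) mul inv (f : T -> T) (x : T) : set T :=
  [set y | S y /\ twisted_rel S mul inv f x y].

Definition reidemeister_classes (S : set T) mul inv (f : T -> T) : set (set T) :=
  [set twisted_class S mul inv f x | x in S].

Definition reidemeister_one (S : set T) mul inv f : Prop :=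
  exists c, reidemeister_classes S mul inv f = [set c].

Definition reidemeister_infinite (S : set T) mul inv f : Prop :=
  infinite_set (reidemeister_classes S mul inv f).

Definition is_automorphism (S : set T) (mul : T -> T -> T) (f : T -> T) : Prop :=
  set_bij S S f /\ (forall x y, S x -> S y -> f (mul x y) = mul (f x) (f y)).

Definition is_homeomorphism (S : set T) (f : T -> T) : Prop :=
  {within S, continuous f} /\
  exists h : T -> T, set_fun S S h /\
    (forall x, S x -> h (f x) = x) /\ (forall x, S x -> f (h x) = x) /\
    {within S, continuous h}.

Definition group_center (S : set T) (mul : T -> T -> T) : set T :=
  [set z | S z /\ forall g, S g -> mul z g = mul g z].

Definition topological_R_infty (S : set T) mul inv : Prop :=
  forall f, is_automorphism S mul f -> is_homeomorphism S f ->
    reidemeister_infinite S mul inv f.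
End Generic.

Notation vec2 R := (R * R)%type.
Notation GT R := (R * (R * R))%type.
Notation QT R := ((R * R) * (R * R))%type.
Section Concrete.
Variable R : realType.
Local Notation vec2 := (vec2 R).
Local Notation GT := (GT R).
Local Notation QT := (QT R).

Definition vadd (x y : vec2) : vec2 := (x.1 + y.1, x.2 + y.2).
Definition vopp (x : vec2) : vec2 := (- x.1, - x.2).
Definition rotcs (c s : R) (x : vec2) : vec2 := (c * x.1 - s * x.2, s * x.1 + c * x.2).
Definition rot2pi (t : R) (x : vec2) : vec2 := rotcs (cos (2 * pi * t)) (sin (2 * pi * t)) x.
Definition rho (x : vec2) : vec2 := (x.1, - x.2).
Definition vscale (a : R) (x : vec2) : vec2 := (a * x.1, a * x.2).

Definition Gmul (g h : GT) : GT := (g.1 + h.1, vadd g.2 (rot2pi g.1 h.2)).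
Definition Ginv (g : GT) : GT := (- g.1, vopp (rot2pi (- g.1) g.2)).
Definition Gone : GT := (0, (0, 0)).
Definition Gset : set GT := setT.

Definition phi (g : GT) : GT := (- g.1, vscale 2 (rho g.2)).

(* SO(2,R) |x R^2, SO(2) realised as pairs (c,s) with c^2+s^2 = 1
   (the matrix [[c,-s],[s,c]]), acting by the standard action *)
Definition Qset : set QT := [set q | q.1.1 ^+ 2 + q.1.2 ^+ 2 = 1].
Definition Qmul (p q : QT) : QT :=
  ((p.1.1 * q.1.1 - p.1.2 * q.1.2, p.1.2 * q.1.1 + p.1.1 * q.1.2),
   vadd p.2 (rotcs p.1.1 p.1.2 q.2)).
Definition Qinv (p : QT) : QT :=
  ((p.1.1, - p.1.2), vopp (rotcs p.1.1 (- p.1.2) p.2)).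
Definition Qone : QT := ((1, 0), (0, 0)).

(* the quotient map G -> G/Z(G) = SO(2) |x R^2 *)
Definition qmap (g : GT) : QT := ((cos (2 * pi * g.1), sin (2 * pi * g.1)), g.2).

(* the automorphism induced by phi on SO(2) |x R^2 *)
Definition phi1 (q : QT) : QT := ((q.1.1, - q.1.2), vscale 2 (rho q.2)).
End Concrete.

From HB Require Import structures.
From mathcomp Require Import all_boot all_order all_algebra.
From mathcomp Require Import all_classical all_reals all_analysis.
From mathcomp Require Import ring lra.
Import Order.TTheory GRing.Theory Num.Theory.
Import numFieldNormedType.Exports.
Local Open Scope classical_set_scope.
Local Open Scope ring_scope.

(** The twisted conjugacy equation [g (t, a) phi(g)^-1 = (s, b)] can be solved
    for every pair of elements.  Writing [g = (u, v)], its first coordinate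
    reads [2u + t = s], and once [u = (s - t)/2] is chosen the second becomes
    [(I - 2M) v = b - rot(u) a], where [M = rot(s) varrho] is a reflection.
    Since [M^2 = I], the matrix [I - 2M] is invertible with inverse
    [-(I + 2M)/3].  Hence [R(phi) = 1].  The quotient map
    [G -> SO(2) |x R^2] is a surjective homomorphism intertwining [phi] and
    [phi1], so every [phi1]-twisted equation is solvable as well, and a finite
    Reidemeister number rules out the [R_infinity] property. *)

Section TwistedConjugacy.
Context {T : topologicalType} {S : set T} {mul : T -> T -> T} {inv : T -> T}.

Lemma reidemeister_one_of_twisted_rel {f : T -> T} {x0 : T} : S x0 ->
  (forall x y, S x -> S y -> twisted_rel S mul inv f x y) ->
  reidemeister_one S mul inv f.
Proof.
move=> Sx0 rel_all.
have classS x : S x -> twisted_class S mul inv f x = S.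
  move=> Sx; apply/seteqP; split => y /=; first by case.
  by move=> Sy; split => //; exact: rel_all.
exists S; apply/seteqP; split; first by move=> _ [x Sx <-]; rewrite /= classS.
by move=> _ ->; exists x0 => //; rewrite classS.
Qed.

Lemma not_topological_R_infty {f : T -> T} :
  is_automorphism S mul f -> is_homeomorphism S f ->
  reidemeister_one S mul inv f -> ~ topological_R_infty S mul inv.
Proof.
move=> f_aut f_homeo [c Rf] Rinfty; have := Rinfty f f_aut f_homeo.
by rewrite /reidemeister_infinite Rf; apply; exact: finite_set1.
Qed.

Lemma is_automorphism_inverse {f h : T -> T} :
  set_fun S S f -> set_fun S S h ->
  (forall x, S x -> h (f x) = x) -> (forall x, S x -> f (h x) = x) ->
  (forall x y, S x -> S y -> f (mul x y) = mul (f x) (f y)) ->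
  is_automorphism S mul f.
Proof.
move=> Sf Sh hK fK f_mul; split => //; split => //.
  by move=> x y /set_mem Sx /set_mem Sy fxy; rewrite -(hK x Sx) fxy hK.
by move=> y Sy; exists (h y); [exact: Sh | exact: fK].
Qed.

Lemma is_homeomorphism_inverse {f h : T -> T} :
  continuous f -> continuous h -> set_fun S S h ->
  (forall x, S x -> h (f x) = x) -> (forall x, S x -> f (h x) = x) ->
  is_homeomorphism S f.
Proof.
move=> f_cont h_cont Sh hK fK; split; first exact: continuous_subspaceT.
by exists h; do !split => //; exact: continuous_subspaceT.
Qed.

End TwistedConjugacy.

Lemma twisted_rel_image {T T' : topologicalType}
    {S : set T} {mul : T -> T -> T} {inv f : T -> T}
    {S' : set T'} {mul' : T' -> T' -> T'} {inv' f' : T' -> T'} {q : T -> T'} :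
  set_fun S S' q -> set_surj S S' q ->
  (forall g h, q (mul g h) = mul' (q g) (q h)) ->
  (forall g, q (inv g) = inv' (q g)) -> (forall g, f' (q g) = q (f g)) ->
  (forall x y, S x -> S y -> twisted_rel S mul inv f x y) ->
  forall x y, S' x -> S' y -> twisted_rel S' mul' inv' f' x y.
Proof.
move=> Sq q_surj q_mul q_inv q_f rel_all _ _ /q_surj[x Sx <-] /q_surj[y Sy <-].
have [g [Sg ->]] := rel_all x y Sx Sy.
by exists (q g); split; [exact: Sq | rewrite !q_mul q_inv q_f].
Qed.

Lemma continuous_pair_map {X1 X2 Y1 Y2 : topologicalType}
    {f : X1 -> Y1} {g : X2 -> Y2} :
  continuous f -> continuous g -> continuous (fun p : X1 * X2 => (f p.1, g p.2)).
Proof.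
move=> f_cont g_cont [x1 x2]; apply: cvg_pair.
  exact: (cvg_comp fst f cvg_fst (f_cont x1)).
exact: (cvg_comp snd g cvg_snd (g_cont x2)).
Qed.

Section Trigonometry.
Variable R : realType.

Lemma cos_sin_2pi_nat (n : nat) :
  cos (2 * pi * n%:R) = 1 :> R /\ sin (2 * pi * n%:R) = 0 :> R.
Proof.
have -> : 2 * pi * n%:R = 0 + (pi *+ 2) *+ n :> R.
  by rewrite add0r mulr_natr mulr_natl.
by rewrite (periodicn (@cosD2pi R)) (periodicn (@sinD2pi R)) cos0 sin0.
Qed.

Lemma cos_sin_2pi_int (k : int) :
  cos (2 * pi * k%:~R) = 1 :> R /\ sin (2 * pi * k%:~R) = 0 :> R.
Proof.
case: k => n; first exact: cos_sin_2pi_nat.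
rewrite NegzE mulrNz mulrN cosN sinN.
by have [-> ->] := cos_sin_2pi_nat n.+1; rewrite oppr0.
Qed.

Lemma cos_2pi_sin_pi (t : R) : cos (2 * pi * t) = 1 - 2 * sin (pi * t) ^+ 2.
Proof.
have -> : 2 * pi * t = pi * t + pi * t by ring.
by rewrite cosD -!expr2 cos2sin2; ring.
Qed.

Lemma cos_2pi_eq1 (t : R) : cos (2 * pi * t) = 1 -> exists k : int, t = k%:~R.
Proof.
(* The fractional part [r] of [t] has [cos (2 pi r) = 1], hence
   [sin (pi r) = 0], which forces [r = 0] as [0 <= r < 1]. *)
move=> cos1; exists (Num.floor t).
have /andP[floor_le lt_floor] := floor_itv t; rewrite intrD in lt_floor.
set r := t - (Num.floor t)%:~R.
suff : r = 0 by rewrite /r => /eqP; rewrite subr_eq0 => /eqP.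
have cosr1 : cos (2 * pi * r) = 1.
  rewrite /r mulrBr cosB cos1.
  by have [-> ->] := cos_sin_2pi_int (Num.floor t); rewrite mulr1 mulr0 addr0.
have sinr0 : sin (pi * r) = 0.
  by apply/eqP; rewrite -sqrf_eq0; apply/eqP; move: cosr1; rewrite cos_2pi_sin_pi; lra.
have pi_gt0 := @pi_gt0 R.
have [r_gt0|] := ltrP 0 r; last by rewrite /r; lra.
have : 0 < sin (pi * r).
  by apply: sin_gt0_pi; apply/andP; split; [exact: mulr_gt0 | rewrite /r; nra].
by rewrite sinr0 ltxx.
Qed.

Lemma cos_sin_2pi_onto (c s : R) : c ^+ 2 + s ^+ 2 = 1 ->
  exists t : R, cos (2 * pi * t) = c /\ sin (2 * pi * t) = s.
Proof.
move=> cs1; have pi_gt0 := @pi_gt0 R.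
have c_itv : -1 <= c <= 1 by apply/andP; split; nra.
have sin_acos_c : sin (acos c) = `|s|.
  by rewrite sin_acos // -sqrtr_sqr; congr Num.sqrt; lra.
have cos_acos_c : cos (acos c) = c by apply: acosK; rewrite in_itv.
have angle (th : R) : exists t, 2 * pi * t = th.
  by exists (th / (2 * pi)); field; apply/eqP; lra.
have [s_ge0|s_lt0] := lerP 0 s.
  have [t tE] := angle (acos c).
  by exists t; rewrite tE cos_acos_c sin_acos_c ger0_norm.
have [t tE] := angle (- acos c).
by exists t; rewrite tE cosN sinN cos_acos_c sin_acos_c ltr0_norm ?opprK.
Qed.

End Trigonometry.

Section SemidirectProduct.
Variable R : realType.
Local Notation GT := (GT R).
Local Notation QT := (QT R).

Lemma rot2piD (a b : R) (x : vec2 R) : rot2pi a (rot2pi b x) = rot2pi (a + b) x.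
Proof.
case: x => x1 x2; rewrite /rot2pi /rotcs /= [2 * pi * (a + b)]mulrDr cosD sinD.
by congr (_, _); ring.
Qed.

Lemma rot2pi_vopp (a : R) (x : vec2 R) : rot2pi a (vopp x) = vopp (rot2pi a x).
Proof. by case: x => x1 x2; rewrite /rot2pi /rotcs /vopp /=; congr (_, _); ring. Qed.

Lemma rot2pi_int (k : int) (x : vec2 R) : rot2pi k%:~R x = x.
Proof.
case: x => x1 x2; rewrite /rot2pi /rotcs /=; have [-> ->] := cos_sin_2pi_int R k.
by congr (_, _); ring.
Qed.

(* [M := rotcs c s \o rho] satisfies [M (M w) = w], so
   [v := -(w + 2 M w) / 3] solves [v - 2 M v = w]. *)
Lemma sub_twice_reflection_onto (w : vec2 R) (c s : R) : c ^+ 2 + s ^+ 2 = 1 ->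
  exists v, vadd v (vopp (vscale 2 (rotcs c s (rho v)))) = w.
Proof.
case: w => w1 w2 cs1.
have [m1 m1E] : exists m1, m1 = c * w1 + s * w2 by eexists.
have [m2 m2E] : exists m2, m2 = s * w1 - c * w2 by eexists.
have Mm1 : c * m1 + s * m2 = w1 by rewrite m1E m2E -[RHS]mul1r -cs1; ring.
have Mm2 : s * m1 - c * m2 = w2 by rewrite m1E m2E -[RHS]mul1r -cs1; ring.
exists (- (w1 + 2 * m1) / 3, - (w2 + 2 * m2) / 3).
by rewrite /vadd /vopp /vscale /rotcs /rho /=; congr (_, _); lra.
Qed.

Lemma G_twisted_rel (x y : GT) : twisted_rel (@Gset R) (@Gmul R) (@Ginv R) (@phi R) x y.
Proof.
case: x => t a; case: y => s b; pose u := (s - t) / 2.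
have [v hv] := sub_twice_reflection_onto (vadd b (vopp (rot2pi u a))) _ _
  (cos2Dsin2 (2 * pi * s)).
exists (u, v); split => //.
rewrite /Gmul /Ginv /phi /= opprK rot2pi_vopp !rot2piD.
have -> : u + t + u = s by rewrite /u; field.
move: hv; case: v => v1 v2; case: b => b1 b2; case: (rot2pi u a) => p1 p2.
rewrite /vadd /vopp /vscale /rot2pi /rotcs /rho /= => -[h1 h2].
by congr (_, (_, _)); lra.
Qed.

Lemma Gcenter_iff (g : GT) :
  group_center (@Gset R) (@Gmul R) g <-> exists k : int, g = (k%:~R, (0, 0)).
Proof.
split; last first.
  case=> k ->; split => // -[s [y1 y2]] _.
  rewrite /Gmul rot2pi_int /vadd /rot2pi /rotcs /=.
  by congr (_, (_, _)); ring.
(* Commuting with [(0, (1, 0))] forces [cos (2 pi t) = 1]; commuting with the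
   half turn [(1/2, 0)] then forces the vector part to vanish. *)
case=> _ central; case: g central => t [x1 x2] central.
have := central (0, (1, 0)) I => /(congr1 (fun p => p.2.1)).
rewrite /Gmul /vadd /rot2pi /rotcs /= !mulr0 cos0 sin0 !mulr1 !mul0r !mul1r => cos1.
have [k tE] := @cos_2pi_eq1 R t ltac:(lra).
have half := central (1 / 2, (0, 0)) I.
move: (congr1 (fun p => p.2.1) half) (congr1 (fun p => p.2.2) half).
rewrite /Gmul /vadd /rot2pi /rotcs /=.
have -> : 2 * pi * (1 / 2) = pi :> R by field.
rewrite cospi sinpi !mulr0 !mul0r !subr0 !addr0 => x1E x2E.
by exists k; rewrite tE; congr (_, (_, _)); lra.
Qed.

Lemma qmap_mul (g h : GT) : qmap (Gmul g h) = Qmul (qmap g) (qmap h).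
Proof.
case: g h => t x [s y]; rewrite /qmap /Gmul /Qmul /=.
by rewrite [2 * pi * (t + s)]mulrDr cosD sinD.
Qed.

Lemma qmap_inv (g : GT) : qmap (Ginv g) = Qinv (qmap g).
Proof. by case: g => t x; rewrite /qmap /Ginv /Qinv /rot2pi /= mulrN cosN sinN. Qed.

Lemma phi1_qmap (g : GT) : phi1 (qmap g) = qmap (phi g).
Proof. by case: g => t x; rewrite /phi1 /qmap /phi /= mulrN cosN sinN. Qed.

Lemma qmap_fun : set_fun (@Gset R) (@Qset R) (@qmap R).
Proof. by move=> g _; rewrite /Qset /= cos2Dsin2. Qed.

Lemma qmap_surj : set_surj (@Gset R) (@Qset R) (@qmap R).
Proof.
move=> [[c s] x] cs1; have [t [ct st]] := @cos_sin_2pi_onto R _ _ cs1.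
by exists (t, x) => //; rewrite /qmap /= ct st.
Qed.

Lemma qmap_eq1 (g : GT) : qmap g = Qone R <-> group_center (@Gset R) (@Gmul R) g.
Proof.
rewrite Gcenter_iff; split; last first.
  by case=> k ->; rewrite /qmap /Qone /=; have [-> ->] := cos_sin_2pi_int R k.
case: g => t [x1 x2]; rewrite /qmap /Qone /= => -[cos1 _ -> ->].
by have [k ->] := @cos_2pi_eq1 R _ cos1; exists k.
Qed.

Lemma Q_twisted_rel (x y : QT) : Qset x -> Qset y ->
  twisted_rel (@Qset R) (@Qmul R) (@Qinv R) (@phi1 R) x y.
Proof.
move: x y; apply: (twisted_rel_image qmap_fun qmap_surj qmap_mul qmap_inv phi1_qmap).
by move=> g h _ _; exact: G_twisted_rel.
Qed.

Lemma continuous_rho : continuous (@rho R).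
Proof. exact: (@continuous_pair_map _ _ _ _ id -%R (fun x => cvg_id) opp_continuous). Qed.

Lemma continuous_vscale_rho (k : R) : continuous (fun x : vec2 R => vscale k (rho x)).
Proof.
have -> : (fun x : vec2 R => vscale k (rho x)) = (fun x => (k * x.1, (- k) * x.2)).
  by apply/funext => -[x1 x2]; rewrite /vscale /rho /= mulrN mulNr.
exact: (continuous_pair_map (@mulrl_continuous _ k) (@mulrl_continuous _ (- k))).
Qed.

Definition phi_inv (g : GT) : GT := (- g.1, vscale 2^-1 (rho g.2)).
Definition phi1_inv (q : QT) : QT := ((q.1.1, - q.1.2), vscale 2^-1 (rho q.2)).

Lemma phiK (g : GT) : phi_inv (phi g) = g.
Proof.
by case: g => t [a b]; rewrite /phi /phi_inv /vscale /rho /=; congr (_, (_, _)); field.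
Qed.

Lemma phi_invK (g : GT) : phi (phi_inv g) = g.
Proof.
by case: g => t [a b]; rewrite /phi /phi_inv /vscale /rho /=; congr (_, (_, _)); field.
Qed.

Lemma phi1K (q : QT) : phi1_inv (phi1 q) = q.
Proof.
case: q => [[c s] [a b]]; rewrite /phi1 /phi1_inv /vscale /rho /=.
by congr ((_, _), (_, _)); field.
Qed.

Lemma phi1_invK (q : QT) : phi1 (phi1_inv q) = q.
Proof.
case: q => [[c s] [a b]]; rewrite /phi1 /phi1_inv /vscale /rho /=.
by congr ((_, _), (_, _)); field.
Qed.

Lemma phi_mul (g h : GT) : phi (Gmul g h) = Gmul (phi g) (phi h).
Proof.
case: g h => t [x1 x2] [s [y1 y2]].
rewrite /phi /Gmul /vadd /vscale /rho /rot2pi /rotcs /= [2 * pi * - _]mulrN cosN sinN.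
by congr (_, (_, _)); ring.
Qed.

Lemma phi1_mul (p q : QT) : phi1 (Qmul p q) = Qmul (phi1 p) (phi1 q).
Proof.
case: p q => [[c1 s1] [x1 x2]] [[c2 s2] [y1 y2]].
by rewrite /phi1 /Qmul /vadd /vscale /rho /rotcs /=; congr ((_, _), (_, _)); ring.
Qed.

Lemma Qset_phi1 : set_fun (@Qset R) (@Qset R) (@phi1 R).
Proof. by move=> [[c s] x]; rewrite /Qset /= sqrrN. Qed.

Lemma Qset_phi1_inv : set_fun (@Qset R) (@Qset R) phi1_inv.
Proof. by move=> [[c s] x]; rewrite /Qset /= sqrrN. Qed.

Lemma phi_automorphism : is_automorphism (@Gset R) (@Gmul R) (@phi R).
Proof.
apply: (is_automorphism_inverse (h := phi_inv)) => [||g _|g _|g h _ _] //.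
- exact: phiK.
- exact: phi_invK.
- exact: phi_mul.
Qed.

Lemma phi_homeomorphism : is_homeomorphism (@Gset R) (@phi R).
Proof.
apply: (is_homeomorphism_inverse (h := phi_inv)) => [|||g _|g _] //.
- exact: (continuous_pair_map (@opp_continuous R) (continuous_vscale_rho 2)).
- exact: (continuous_pair_map (@opp_continuous R) (continuous_vscale_rho 2^-1)).
- exact: phiK.
- exact: phi_invK.
Qed.

Lemma phi1_automorphism : is_automorphism (@Qset R) (@Qmul R) (@phi1 R).
Proof.
apply: (is_automorphism_inverse Qset_phi1 Qset_phi1_inv) => [q _|q _|p q _ _].
- exact: phi1K.
- exact: phi1_invK.
- exact: phi1_mul.
Qed.

Lemma phi1_homeomorphism : is_homeomorphism (@Qset R) (@phi1 R).
Proof.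
apply: (is_homeomorphism_inverse (h := phi1_inv)) => [|||q _|q _].
- exact: (continuous_pair_map continuous_rho (continuous_vscale_rho 2)).
- exact: (continuous_pair_map continuous_rho (continuous_vscale_rho 2^-1)).
- exact: Qset_phi1_inv.
- exact: phi1K.
- exact: phi1_invK.
Qed.

End SemidirectProduct.

Theorem mainTheorem15 (R : realType) :
  is_automorphism (@Gset R) (@Gmul R) (@phi R) /\
  is_homeomorphism (@Gset R) (@phi R) /\
  reidemeister_one (@Gset R) (@Gmul R) (@Ginv R) (@phi R) /\
  group_center (@Gset R) (@Gmul R) = [set g | exists k : int, g = (k%:~R, (0, 0))] /\
  (forall g h : GT R, qmap (Gmul g h) = Qmul (qmap g) (qmap h)) /\
  set_surj (@Gset R) (@Qset R) (@qmap R) /\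
  set_fun (@Gset R) (@Qset R) (@qmap R) /\
  (forall g : GT R, qmap g = Qone R <-> group_center (@Gset R) (@Gmul R) g) /\
  (forall g : GT R, phi1 (qmap g) = qmap (phi g)) /\
  is_automorphism (@Qset R) (@Qmul R) (@phi1 R) /\
  is_homeomorphism (@Qset R) (@phi1 R) /\
  reidemeister_one (@Qset R) (@Qmul R) (@Qinv R) (@phi1 R) /\
  ~ topological_R_infty (@Gset R) (@Gmul R) (@Ginv R) /\
  ~ topological_R_infty (@Qset R) (@Qmul R) (@Qinv R).
Proof.
have RG : reidemeister_one (@Gset R) (@Gmul R) (@Ginv R) (@phi R).
  by apply: (reidemeister_one_of_twisted_rel (x0 := Gone R)) => // x y _ _;
    exact: G_twisted_rel.
have RQ : reidemeister_one (@Qset R) (@Qmul R) (@Qinv R) (@phi1 R).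
  apply: (reidemeister_one_of_twisted_rel (x0 := Qone R)); last exact: Q_twisted_rel.
  by rewrite /Qset /=; lra.
have center : group_center (@Gset R) (@Gmul R) =
    [set g | exists k : int, g = (k%:~R, (0, 0))].
  by apply/funext => g; apply/propext; exact: Gcenter_iff.
split; first exact: phi_automorphism.
split; first exact: phi_homeomorphism.
split; first exact: RG.
split; first exact: center.
split; first exact: qmap_mul.
split; first exact: qmap_surj.
split; first exact: qmap_fun.
split; first exact: qmap_eq1.
split; first exact: phi1_qmap.
split; first exact: phi1_automorphism.
split; first exact: phi1_homeomorphism.
split; first exact: RQ.
split; first exact: not_topological_R_infty (phi_automorphism R) (phi_homeomorphism R) RG.
exact: not_topological_R_infty (phi1_automorphism R) (phi1_homeomorphism R) RQ.
Qed.
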